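(* Let $\mathcal{Z}$ be a data space with unknown distribution $\mu$, let $S=(Z_1,\dots,Z_n)$ have i.i.d. entries $Z_i\sim\mu$, let the learning algorithm be a Markov kernel $P_{W|S}$ producing a hypothesis $W$ in a hypothesis class $\mathcal{W}$, with $P_W$ the marginal of $W$ and $P_{W,Z_i}$ the joint law of $(W,Z_i)$. Let $l:\mathcal{W}\times\mathcal{Z}\to\mathbb{R}^+$ be a loss function. For each $i=1,\dots,n$ let $\widehat{P}_{W,Z_i}$ be a joint distribution on $\mathcal{W}\times\mathcal{Z}$ such that, when $(W,Z_i)\sim\widehat{P}_{W,Z_i}$, the random variable $l(W,Z_i)$ is $\sigma$-subgaussian. Let $A_i=KL(P_W\otimes\mu\,\|\,\widehat{P}_{W,Z_i})$ and $B_i=KL(P_{W,Z_i}\,\|\,\widehat{P}_{W,Z_i})$. Then $$|\overline{\text{gen}}(P_{W|S},\mu)|\le\frac2n\sum_{i=1}^n\sqrt{\sigma^2(A_i+B_i)}.$$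
   Context: A random variable $X$ is $\sigma$-subgaussian if $\mathbb{E}[e^{\lambda(X-\mathbb{E}X)}]\le e^{\lambda^2\sigma^2/2}$ for all $\lambda\in\mathbb{R}$. Expected generalization error: $\overline{\text{gen}}(P_{W|S},\mu)=\mathbb{E}_{P_{W,S}}\big[\int l(W,z)\,\mu(dz)-\frac1n\sum_{i=1}^n l(W,Z_i)\big]$. $KL$ denotes the Kullback–Leibler divergence with natural logarithm; $P_W\otimes\mu$ is the product measure. *)

From HB Require Import structures.
From mathcomp Require Import all_boot all_order all_algebra.
From mathcomp Require Import all_classical all_reals all_analysis.
Set Implicit Arguments. Unset Strict Implicit. Unset Printing Implicit Defensive.
Import Order.TTheory GRing.Theory Num.Theory.
Import numFieldNormedType.Exports.
Local Open Scope classical_set_scope.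
Local Open Scope ring_scope.

(* sigma-subgaussian random variable X under the probability P:
   E[exp(lambda (X - E X))] <= exp(lambda^2 sigma^2 / 2) for all real lambda
   (X is required to be integrable, so that E X exists as a real number). *)
Definition subgaussian {d} {T : measurableType d} {R : realType}
    (P : probability T R) (X : T -> R) (sigma : R) : Prop :=
  P.-integrable [set: T] (EFin \o X) /\
  forall lam : R,
    (\int[P]_x (expR (lam * (X x - fine ('E_P[X]))))%:E <=
      (expR (lam ^+ 2 * sigma ^+ 2 / 2))%:E)%E.

Definition KL {d} {T : measurableType d} {R : realType}
    (P Q : probability T R) : \bar R :=
  if pselect (P `<< Q) then
    (\int[P]_x (ln (fine (Radon_Nikodym (charge_of_finite_measure P) Q x)))%:E)%E
  else +oo%E.

Definition sqrt_sigma2_mul {R : realType} (sigma : R) (x : \bar R) : \bar R :=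
  if x == +oo%E then +oo%E else (Num.sqrt (sigma ^+ 2 * fine x))%:E.

From HB Require Import structures.
From mathcomp Require Import all_boot all_order all_algebra.
From mathcomp Require Import all_classical all_reals all_analysis.
From mathcomp Require Import measurable_realfun ring lra.
Set Implicit Arguments. Unset Strict Implicit. Unset Printing Implicit Defensive.
Import Order.TTheory GRing.Theory Num.Theory.
Import numFieldNormedType.Exports.
Local Open Scope classical_set_scope.
Local Open Scope ring_scope.

(* Change of measure (Donsker-Varadhan): if P << Q and g1, g2 >= 0 satisfy
   E_Q[exp (g1 - g2)] <= 1, then E_P g1 <= E_P g2 + KL(P || Q); this is
   1 + u <= exp u integrated against P, with u = g1 - g2 - log (dP/dQ).
   Taking g1 - g2 = +-lam (l - E_Q l) - lam^2 sigma^2 / 2, the subgaussian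
   bound on the moment generating function of l under Q gives
   lam |E_P l - E_Q l| <= KL(P || Q) + lam^2 sigma^2 / 2 for all lam > 0, i.e.
   |E_P l - E_Q l| <= sqrt (2 sigma^2 KL(P || Q)).  With Q = Phat_i and
   P = P_W (x) mu or P = P_{W,Z_i}, the triangle inequality through E_Q l and
   sqrt (2a) + sqrt (2b) <= 2 sqrt (a + b) bound |E_{P_W (x) mu} l - E_{P_{W,Z_i}} l|.
   By Fubini the expected generalization error is the average over i of these
   differences; if some divergence is infinite the bound is +oo. *)

Section sqrt_inequalities.
Variable R : rcfType.

Lemma le_sqrt_of_forall_lambda (D k s2 : R) : 0 <= D -> 0 <= k -> 0 <= s2 ->
  (forall lam, 0 < lam -> lam * D <= k + lam ^+ 2 * s2 / 2) ->
  D <= Num.sqrt (2 * (s2 * k)).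
Proof.
move=> D0 k0 s0 hlam.
have [->|D_neq0] := eqVneq D 0; first exact: sqrtr_ge0.
have Dp : 0 < D by rewrite lt_def D_neq0 D0.
suff DD : D ^+ 2 <= 2 * (s2 * k).
  by rewrite -(ger0_norm D0) -sqrtr_sqr ler_sqrt // mulr_ge0 // mulr_ge0.
have [s20|s2_neq0] := eqVneq s2 0.
  have := hlam ((k + 1) / D); rewrite s20 divr_gt0 ?ltr_wpDl //.
  by rewrite mulr0 mul0r addr0 divfK ?gt_eqF // => /(_ isT); lra.
have s2p : 0 < s2 by rewrite lt_def s2_neq0 s0.
(* the optimal choice lam = D / s2 *)
have := hlam (D / s2); rewrite divr_gt0 // => /(_ isT).
have -> : D / s2 * D = D ^+ 2 / s2 by field.
have -> : (D / s2) ^+ 2 * s2 / 2 = D ^+ 2 / s2 / 2 by field.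
move=> hD; have : D ^+ 2 / s2 <= 2 * k by lra.
rewrite ler_pdivrMr // => hk; nra.
Qed.

Lemma sqrt_mul2D_le (x y : R) : 0 <= x -> 0 <= y ->
  Num.sqrt (2 * x) + Num.sqrt (2 * y) <= 2 * Num.sqrt (x + y).
Proof.
move=> x0 y0; set u := Num.sqrt (2 * x); set v := Num.sqrt (2 * y).
have uu : u * u = 2 * x by rewrite -expr2 sqr_sqrtr // mulr_ge0.
have vv : v * v = 2 * y by rewrite -expr2 sqr_sqrtr // mulr_ge0.
have -> : 2 * Num.sqrt (x + y) = Num.sqrt (4 * (x + y)).
  by rewrite sqrtrM ?ler0n // (_ : 4 = 2 ^+ 2) ?sqrtr_sqr ?ger0_norm //; lra.
rewrite -(ger0_norm (addr_ge0 (sqrtr_ge0 _) (sqrtr_ge0 _))) -sqrtr_sqr.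
rewrite ler_sqrt; last by apply: mulr_ge0; lra.
have := sqr_ge0 (u - v); rewrite -/u -/v !expr2; nra.
Qed.

End sqrt_inequalities.

Lemma dist_mean_le (R : numFieldType) (n : nat) (a : R) (b : 'I_n -> R) :
  (0 < n)%N ->
  `|a - n%:R^-1 * \sum_(i < n) b i| <= n%:R^-1 * \sum_(i < n) `|a - b i|.
Proof.
move=> n0; have n_neq0 : n%:R != 0 :> R by rewrite pnatr_eq0 -lt0n.
have -> : a - n%:R^-1 * \sum_(i < n) b i = n%:R^-1 * \sum_(i < n) (a - b i).
  by rewrite sumrB sumr_const card_ord -mulr_natr; field.
by rewrite normrM ger0_norm ?invr_ge0 ?ler0n // ler_wpM2l ?invr_ge0 ?ler_norm_sum.
Qed.

Lemma probability_integral_cst {d} {T : measurableType d} {R : realType}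
  (P : probability T R) (c : R) : (\int[P]_x c%:E)%E = c%:E.
Proof.
have := integral_cst P measurableT c%:E; rewrite /cst => ->.
by rewrite [X in (_ * X)%E](_ : _ = 1%E) ?mule1 //; exact: probability_setT.
Qed.

Lemma ge0_integralD_EFin {d} {T : measurableType d} {R : realType}
  (mu : measure T R) (f g : T -> R) :
  (forall x, 0 <= f x) -> (forall x, 0 <= g x) ->
  measurable_fun setT f -> measurable_fun setT g ->
  (\int[mu]_x (f x + g x)%:E = \int[mu]_x (f x)%:E + \int[mu]_x (g x)%:E)%E.
Proof.
move=> f0 g0 mf mg; under eq_integral do rewrite EFinD.
by apply: ge0_integralD => // [x _||x _|]; rewrite ?lee_fin //; exact/measurable_EFinP.
Qed.

Lemma ln_neg_mul_le1 (R : realType) (t : R) : 0 <= t -> Num.max (- ln t) 0 * t <= 1.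
Proof.
rewrite le_eqVlt => /orP[/eqP <-|t0]; first by rewrite mulr0.
have [lnt0|lnt0] := leP (- ln t) 0; first by rewrite mul0r.
have : ln t^-1 < t^-1 by apply: ln_sublinear; rewrite invr_gt0.
rewrite lnV ?posrE // -(mulVf (lt0r_neq0 t0)) => /ltW.
by rewrite ler_pM2r.
Qed.

Section log_density.
Context {d} {T : measurableType d} {R : realType} (P Q : probability T R).
Hypothesis PQ : P `<< Q.
Local Open Scope ereal_scope.

Definition rn_density x : R := fine (Radon_Nikodym_SigmaFinite.f P Q x).

(* [ln 0 = 0], so [log_density] vanishes where the density does. *)
Definition log_density x : R := ln (rn_density x).

Lemma rn_density_ge0 x : (0 <= rn_density x)%R.
Proof. exact/fine_ge0/Radon_Nikodym_SigmaFinite.f_ge0. Qed.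

Lemma rn_densityE x : Radon_Nikodym_SigmaFinite.f P Q x = (rn_density x)%:E.
Proof. by rewrite fineK // Radon_Nikodym_SigmaFinite.f_fin_num. Qed.

Lemma measurable_rn_density : measurable_fun setT rn_density.
Proof.
apply/measurable_EFinP; rewrite (_ : _ \o _ = Radon_Nikodym_SigmaFinite.f P Q).
  exact: measurable_int (Radon_Nikodym_SigmaFinite.f_integrable PQ).
by apply/funext => x /=; rewrite rn_densityE.
Qed.

Lemma measurable_log_density : measurable_fun setT log_density.
Proof. exact: measurableT_comp (@measurable_ln R) measurable_rn_density. Qed.

Lemma integral_rn_density (k : T -> R) : (forall x, 0 <= k x)%R ->
  measurable_fun setT k ->
  \int[P]_x (k x)%:E = \int[Q]_x (k x * rn_density x)%:E.
Proof.
move=> k0 mk.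
rewrite -(Radon_Nikodym_SigmaFinite.change_of_variables PQ) //.
- by apply: eq_integral => x _; rewrite rn_densityE.
- exact/measurable_EFinP.
Qed.

Lemma KL_log_densityE : KL P Q =
  \int[P]_x (log_density^\+ x)%:E - \int[P]_x (log_density^\- x)%:E.
Proof.
rewrite /KL; case: pselect => [?|//].
have -> : \int[P]_x (ln (fine (Radon_Nikodym (charge_of_finite_measure P) Q x)))%:E =
    \int[P]_x (log_density x)%:E.
  apply: ae_eq_integral => //.
  - apply/measurable_EFinP; apply: measurableT_comp (@measurable_ln R) _.
    exact: measurableT_comp (fine_measurable _) _.
  - exact/measurable_EFinP/measurable_log_density.
  - apply: null_dominates_ae_eq PQ _ => //.
    apply: filterS (ae_eq_Radon_Nikodym_SigmaFinite PQ measurableT) => x /= RN_x _.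
    by rewrite /log_density /rn_density RN_x.
rewrite integralE; congr (_ - _); apply: eq_integral => x _.
- by rewrite funeposE /funrpos EFin_max.
- by rewrite funenegE /funrneg EFin_max EFinN.
Qed.

Lemma integral_log_density_neg_le1 : \int[P]_x (log_density^\- x)%:E <= 1.
Proof.
have mneg := measurable_funrneg measurable_log_density.
rewrite integral_rn_density // -(probability_integral_cst Q 1%R).
apply: ge0_le_integral => //.
- by move=> x _; rewrite lee_fin mulr_ge0 // rn_density_ge0.
- exact/measurable_EFinP/measurable_funM/measurable_rn_density.
- by move=> x _; rewrite lee_fin ln_neg_mul_le1 // rn_density_ge0.
Qed.

End log_density.

Section donsker_varadhan.
Context {d} {T : measurableType d} {R : realType} (P Q : probability T R).
Hypothesis PQ : P `<< Q.
Variables g1 g2 : T -> R.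
Hypotheses (g1_ge0 : forall x, 0 <= g1 x) (g2_ge0 : forall x, 0 <= g2 x).
Hypotheses (mg1 : measurable_fun setT g1) (mg2 : measurable_fun setT g2).

Let G := rn_density P Q.
Let L := log_density P Q.
Let pos := [set x | 0 < G x].

Let measurable_pos : measurable pos.
Proof.
have mG : measurable_fun setT (EFin \o G) by exact/measurable_EFinP/measurable_rn_density.
by have := measurable_lte measurableT (measurable_cst (0 : \bar R)) mG; rewrite setTI.
Qed.

(* Where the density vanishes the witness is invisible to [Q]-integrals against
   the density; there [g1 + 1] makes [witness_bound] hold. *)
Let witness x :=
  expR (g1 x - g2 x - L x) * \1_pos x + (g1 x + 1) * \1_(~` pos) x.

Let witness_ge0 x : 0 <= witness x.
Proof. by rewrite addr_ge0 // mulr_ge0 // ?expR_ge0 ?addr_ge0. Qed.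

Let measurable_witness : measurable_fun setT witness.
Proof.
apply: measurable_funD; apply: measurable_funM.
- apply: measurableT_comp (@measurable_expR R) _.
  exact/measurable_funB/(measurable_log_density PQ)/measurable_funB.
- exact: measurable_indic measurable_pos.
- exact/measurable_funD/measurable_cst.
- exact/measurable_indic/measurableC.
Qed.

Let witness_bound x : g1 x + L^\- x + 1 <= g2 x + L^\+ x + witness x.
Proof.
rewrite /witness /funrneg /funrpos !indicE.
have [Gp|G_le0] := ltP 0 (G x).
  rewrite mem_set // memNset /= ?Gp // mulr1 mulr0 addr0.
  have := expR_ge1Dx (g1 x - g2 x - L x).
  by have [] := leP 0 (L x); have [] := leP (- L x) 0; lra.
have L0 : L x = 0 by rewrite /L /log_density ln0.
have npos : ~ pos x by apply/negP; rewrite -leNgt.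
rewrite (memNset npos) (mem_set (npos : (~` pos) x)).
by rewrite L0 oppr0 maxxx mulr0 mulr1 add0r; have := g2_ge0 x; lra.
Qed.

Let witness_density_le x : witness x * G x <= expR (g1 x - g2 x).
Proof.
rewrite /witness !indicE.
have [Gp|G_le0] := ltP 0 (G x).
  rewrite mem_set // memNset /= ?Gp // mulr1 mulr0 addr0.
  by rewrite expRD expRN /L /log_density lnK ?posrE // divfK ?gt_eqF.
have -> : G x = 0 by apply/eqP; rewrite eq_le G_le0 rn_density_ge0.
by rewrite mulr0 expR_ge0.
Qed.

Local Open Scope ereal_scope.

Lemma donsker_varadhan : \int[Q]_x (expR (g1 x - g2 x))%:E <= 1 ->
  \int[P]_x (g1 x)%:E <= \int[P]_x (g2 x)%:E + KL P Q.
Proof.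
move=> hQ.
have mL := measurable_log_density PQ.
have mLp := measurable_funrpos mL; have mLn := measurable_funrneg mL.
have witness_le1 : \int[P]_x (witness x)%:E <= 1.
  rewrite (integral_rn_density PQ) //; apply: le_trans hQ.
  apply: ge0_le_integral => //.
  - by move=> x _; rewrite lee_fin mulr_ge0 // rn_density_ge0.
  - exact/measurable_EFinP/measurable_funM/(measurable_rn_density PQ).
  - apply/measurable_EFinP.
    exact: measurableT_comp (@measurable_expR R) (measurable_funB mg1 mg2).
  - by move=> x _; rewrite lee_fin witness_density_le.
have : \int[P]_x (g1 x + L^\- x + 1)%:E <= \int[P]_x (g2 x + L^\+ x + witness x)%:E.
  apply: ge0_le_integral => //.
  - by move=> x _; rewrite lee_fin !addr_ge0.
  - exact/measurable_EFinP/measurable_funD/measurable_cst/measurable_funD.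
  - exact/measurable_EFinP/measurable_funD/measurable_witness/measurable_funD.
  - by move=> x _; rewrite lee_fin witness_bound.
have mgL1 : measurable_fun setT (fun x => g1 x + L^\- x)%R by exact: measurable_funD.
have mgL2 : measurable_fun setT (fun x => g2 x + L^\+ x)%R by exact: measurable_funD.
have gL1_ge0 x : (0 <= g1 x + L^\- x)%R by rewrite addr_ge0.
have gL2_ge0 x : (0 <= g2 x + L^\+ x)%R by rewrite addr_ge0.
rewrite ge0_integralD_EFin // probability_integral_cst.
rewrite ge0_integralD_EFin // ge0_integralD_EFin // ge0_integralD_EFin //.
move=> /le_trans /(_ (leeD2l _ witness_le1)); rewrite leeD2rE //.
have Lneg_fin : \int[P]_x (L^\- x)%:E \is a fin_num.
  rewrite ge0_fin_numE; last by apply: integral_ge0 => x _; rewrite lee_fin.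
  exact: le_lt_trans (integral_log_density_neg_le1 PQ) (ltry _).
by rewrite (KL_log_densityE PQ) addeA leeBrDr.
Qed.

End donsker_varadhan.

Section KL_properties.
Context {d} {T : measurableType d} {R : realType} (P Q : probability T R).
Local Open Scope ereal_scope.

Lemma KL_abs_continuous : KL P Q != +oo -> P `<< Q.
Proof. by rewrite /KL; case: pselect => // _; rewrite eqxx. Qed.

Lemma KL_ge0 : 0 <= KL P Q.
Proof.
have [PQ|] := pselect (P `<< Q); last by rewrite /KL; case: pselect.
have := donsker_varadhan PQ (fun=> lexx 0%R) (fun=> lexx 0%R)
  (measurable_cst _) (measurable_cst _).
by rewrite !probability_integral_cst subrr expR0 lexx add0e; apply.
Qed.

Lemma KL_neqNy : KL P Q != -oo.
Proof. by rewrite gt_eqF // (lt_le_trans (ltNyr 0)) // KL_ge0. Qed.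

End KL_properties.

Section subgaussian_change_of_measure.
Context {d} {T : measurableType d} {R : realType} (P Q : probability T R).
Variables (l : T -> R) (s : R).
Hypotheses (l_ge0 : forall x, 0 <= l x) (ml : measurable_fun setT l).
Hypothesis l_subgaussian : subgaussian Q l s.

Let m := fine (\int[Q]_x (l x)%:E)%E.
Let c lam := lam ^+ 2 * s ^+ 2 / 2.

Let c_ge0 lam : 0 <= c lam.
Proof. by rewrite divr_ge0 // mulr_ge0 // sqr_ge0. Qed.

Local Open Scope ereal_scope.

Let mgf_le1 lam (h : T -> R) : (forall x, h x = lam * (l x - m) - c lam)%R ->
  \int[Q]_x (expR (h x))%:E <= 1.
Proof.
move=> hE; have [_ mgf] := l_subgaussian.
under eq_integral do rewrite hE expRD EFinM muleC.
rewrite ge0_integralZl_EFin ?expR_ge0 //; last first.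
  apply/measurable_EFinP; apply: measurableT_comp (@measurable_expR R) _.
  exact/measurable_funM/measurable_funB/measurable_cst.
have := mgf lam; rewrite unlock -/m => mgf_lam.
apply: le_trans (lee_wpmul2l _ mgf_lam) _; first by rewrite lee_fin expR_ge0.
by rewrite -EFinM -expRD addNr expR0.
Qed.

Variable k : R.
Hypothesis KL_k : KL P Q = k%:E.

Let PQ : P `<< Q.
Proof. by apply: KL_abs_continuous; rewrite KL_k. Qed.

Let m_ge0 : (0 <= m)%R.
Proof. by apply/fine_ge0/integral_ge0 => x _; rewrite lee_fin. Qed.

Let integral_scale lam : (0 <= lam)%R ->
  \int[P]_x (lam * l x)%:E = lam%:E * \int[P]_x (l x)%:E.
Proof.
move=> lam0; under eq_integral do rewrite EFinM.
by rewrite ge0_integralZl_EFin //; [move=> x _; rewrite lee_fin | exact/measurable_EFinP].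
Qed.

Let upper_bound lam : (0 < lam)%R ->
  lam%:E * \int[P]_x (l x)%:E <= (lam * m + c lam + k)%:E.
Proof.
move=> lam0; have lam_ge0 := ltW lam0.
have := donsker_varadhan PQ (g1 := (fun x => lam * l x)%R) (g2 := (fun=> lam * m + c lam)%R)
  (fun x => mulr_ge0 lam_ge0 (l_ge0 x)) (fun=> addr_ge0 (mulr_ge0 lam_ge0 m_ge0) (c_ge0 lam))
  (measurable_funM (measurable_cst _) ml) (measurable_cst _).
rewrite integral_scale // probability_integral_cst KL_k -EFinD; apply.
by apply: (mgf_le1 (lam := lam)) => x; ring.
Qed.

Let lower_bound lam : (0 < lam)%R ->
  (lam * m)%:E <= lam%:E * \int[P]_x (l x)%:E + (c lam + k)%:E.
Proof.
move=> lam0; have lam_ge0 := ltW lam0.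
have := donsker_varadhan PQ (g1 := (fun=> lam * m)%R) (g2 := (fun x => lam * l x + c lam)%R)
  (fun=> mulr_ge0 lam_ge0 m_ge0) (fun x => addr_ge0 (mulr_ge0 lam_ge0 (l_ge0 x)) (c_ge0 lam))
  (measurable_cst _) (measurable_funD (measurable_funM (measurable_cst _) ml) (measurable_cst _)).
rewrite ge0_integralD_EFin //; last 2 first.
- by move=> x; rewrite mulr_ge0.
- exact: measurable_funM (measurable_cst _) ml.
rewrite integral_scale // !probability_integral_cst KL_k -addeA -EFinD; apply.
by apply: (mgf_le1 (lam := - lam)) => x; rewrite /c sqrrN; ring.
Qed.

Lemma subgaussian_KL_bound : \int[P]_x (l x)%:E \is a fin_num /\
  (`|fine (\int[P]_x (l x)%:E) - m| <= Num.sqrt (2 * (s ^+ 2 * k)))%R.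
Proof.
have int_ge0 : 0 <= \int[P]_x (l x)%:E by apply: integral_ge0 => x _; rewrite lee_fin.
have int_fin : \int[P]_x (l x)%:E \is a fin_num.
  rewrite ge0_fin_numE //; have := upper_bound ltr01; rewrite mul1e.
  by move/le_lt_trans; apply; exact: ltry.
split=> //; set a := fine _; have aE : \int[P]_x (l x)%:E = a%:E by rewrite fineK.
have k_ge0 : (0 <= k)%R by rewrite -lee_fin -KL_k KL_ge0.
apply: le_sqrt_of_forall_lambda => // [|lam lam0]; first exact: sqr_ge0.
have := upper_bound lam0; have := lower_bound lam0.
rewrite aE -!EFinM -!EFinD !lee_fin /c => lower upper.
have [am|am] := leP 0%R (a - m)%R.
  by rewrite ger0_norm // mulrBr; lra.
by rewrite ltr0_norm // mulrN mulrBr; lra.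
Qed.

End subgaussian_change_of_measure.

Lemma dist_integral_le_KL {d} {T : measurableType d} {R : realType}
    (P1 P2 Q : probability T R) (l : T -> R) (s k1 k2 : R) :
  (forall x, 0 <= l x) -> measurable_fun setT l -> subgaussian Q l s ->
  KL P1 Q = k1%:E -> KL P2 Q = k2%:E ->
  `|fine (\int[P1]_x (l x)%:E)%E - fine (\int[P2]_x (l x)%:E)%E|
    <= 2 * Num.sqrt (s ^+ 2 * (k1 + k2)).
Proof.
move=> l_ge0 ml l_sg KL1 KL2.
have k1_ge0 : 0 <= k1 by rewrite -lee_fin -KL1 KL_ge0.
have k2_ge0 : 0 <= k2 by rewrite -lee_fin -KL2 KL_ge0.
have [_ bound1] := subgaussian_KL_bound l_ge0 ml l_sg KL1.
have [_ bound2] := subgaussian_KL_bound l_ge0 ml l_sg KL2.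
apply: le_trans (ler_distD (fine (\int[Q]_x (l x)%:E)%E) _ _) _.
rewrite mulrDr; apply: le_trans (sqrt_mul2D_le (mulr_ge0 (sqr_ge0 s) k1_ge0)
  (mulr_ge0 (sqr_ge0 s) k2_ge0)).
by rewrite distrC in bound2; exact: lerD.
Qed.

Lemma sqrt_sigma2_mul_ge0 (R : realType) (s : R) (x : \bar R) :
  (0 <= sqrt_sigma2_mul s x)%E.
Proof. by rewrite /sqrt_sigma2_mul; case: ifP => // _; rewrite lee_fin sqrtr_ge0. Qed.

Section image_laws.
Context {d1 d2} {X : measurableType d1} {Y : measurableType d2} {R : realType}.
Local Open Scope ereal_scope.

Lemma ge0_integral_image_law (mu : probability X R) (nu : probability Y R)
    (phi : X -> Y) (f : Y -> \bar R) :
  measurable_fun setT phi -> (forall C, measurable C -> nu C = mu (phi @^-1` C)) ->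
  measurable_fun setT f -> (forall y, 0 <= f y) ->
  \int[nu]_y f y = \int[mu]_x f (phi x).
Proof.
move=> mphi nu_law mf f_ge0.
rewrite (eq_measure_integral (pushforward mu phi)) ?ge0_integral_pushforward //.
by move=> C mC _; exact: nu_law.
Qed.

Lemma ge0_integral_product_law (muX : probability X R) (muY : probability Y R)
    (nu : probability (X * Y)%type R) (f : X * Y -> \bar R) :
  (forall A B, measurable A -> measurable B -> nu (A `*` B) = muX A * muY B) ->
  measurable_fun setT f -> (forall p, 0 <= f p) ->
  \int[nu]_p f p = \int[muX]_x \int[muY]_y f (x, y).
Proof.
move=> nu_prod mf f_ge0.
rewrite (eq_measure_integral (muX \x muY)) ?fubini_tonelli1 //.
by move=> C mC _; rewrite -(product_measure_unique nu_prod mC).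
Qed.

End image_laws.

Section generalization_error.
Context {dW dZ} {Wsp : measurableType dW} {Zsp : measurableType dZ} {R : realType}.
Variables (n : nat) (mu : probability Zsp R) (PWS : probability (Wsp * n.-tuple Zsp)%type R).
Variables (PW : probability Wsp R) (PWZ : 'I_n -> probability (Wsp * Zsp)%type R).
Variables (PWmu : probability (Wsp * Zsp)%type R) (l : Wsp * Zsp -> R).
Hypothesis PW_marginal : forall A, measurable A -> PW A = PWS (A `*` setT).
Hypothesis PWZ_marginal : forall i C, measurable C ->
  PWZ i C = PWS [set p | C (p.1, tnth p.2 i)].
Hypothesis PWmu_product : forall A B, measurable A -> measurable B ->
  (PWmu (A `*` B) = PW A * mu B)%E.
Hypotheses (ml : measurable_fun setT l) (l_ge0 : forall p, 0 <= l p).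
Local Open Scope ereal_scope.

Definition generalization_error := \int[PWS]_p
  ((\int[mu]_z (l (p.1, z))%:E) - ((n%:R)^-1 * \sum_(i < n) l (p.1, tnth p.2 i))%:E).

Let mEl : measurable_fun setT (EFin \o l). Proof. exact/measurable_EFinP. Qed.
Let El_ge0 p : 0 <= (EFin \o l) p. Proof. by rewrite /= lee_fin. Qed.

Let population_risk w := \int[mu]_z (l (w, z))%:E.

Let measurable_population_risk : measurable_fun setT population_risk.
Proof. exact: (measurable_fun_fubini_tonelli_F (m2 := mu) _ mEl El_ge0). Qed.

Lemma integral_loss_product :
  \int[PWmu]_p (l p)%:E = \int[PWS]_p population_risk p.1.
Proof.
rewrite (ge0_integral_product_law PWmu_product mEl El_ge0).
apply: (ge0_integral_image_law measurable_fst) => //.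
- move=> A mA; rewrite PW_marginal //; congr (PWS _).
  by apply/seteqP; split=> -[x y] //=; case.
- by move=> w; apply: integral_ge0 => z _; rewrite lee_fin.
Qed.

Let measurable_sample i :
  measurable_fun setT (fun p : Wsp * n.-tuple Zsp => (p.1, tnth p.2 i)).
Proof.
apply: measurable_fun_pair; first exact: measurable_fst.
exact: measurableT_comp (measurable_tnth i) measurable_snd.
Qed.

Lemma integral_loss_sample i :
  \int[PWZ i]_p (l p)%:E = \int[PWS]_p (l (p.1, tnth p.2 i))%:E.
Proof.
by apply: (ge0_integral_image_law (measurable_sample i)) => // C mC; rewrite PWZ_marginal.
Qed.

Lemma generalization_errorE : (0 < n)%N ->
  \int[PWmu]_p (l p)%:E \is a fin_num ->
  (forall i, \int[PWZ i]_p (l p)%:E \is a fin_num) ->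
  generalization_error = (fine (\int[PWmu]_p (l p)%:E)
     - n%:R^-1 * \sum_(i < n) fine (\int[PWZ i]_p (l p)%:E))%:E.
Proof.
move=> n_gt0 PWmu_fin PWZ_fin.
have int_risk : PWS.-integrable setT (fun p => population_risk p.1).
  apply/integrableP; split.
    exact: measurableT_comp measurable_population_risk measurable_fst.
  have risk_ge0 w : 0 <= population_risk w.
    by apply: integral_ge0 => z _; rewrite lee_fin.
  under eq_integral do rewrite gee0_abs //.
  by rewrite -integral_loss_product -(fineK PWmu_fin) ltry.
have int_sample i : PWS.-integrable setT (fun p => (l (p.1, tnth p.2 i))%:E).
  apply/integrableP; split; first exact/measurable_EFinP/(measurableT_comp ml).
  under eq_integral do rewrite gee0_abs ?lee_fin //.
  by rewrite -integral_loss_sample -(fineK (PWZ_fin i)) ltry.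
have int_sum : PWS.-integrable setT
    (fun p => \sum_(i < n) (l (p.1, tnth p.2 i))%:E).
  by apply: (integrable_sum measurableT) => i _; exact: int_sample.
rewrite /generalization_error (eq_integral (fun p => population_risk p.1 -
    (n%:R^-1)%:E * \sum_(i < n) (l (p.1, tnth p.2 i))%:E)); last first.
  by move=> p _; rewrite sumEFin -EFinM.
rewrite integralB //; last exact: integrableZl.
rewrite integralZl // integral_sum //.
rewrite -integral_loss_product -(fineK PWmu_fin).
under eq_bigr do rewrite -integral_loss_sample -(fineK (PWZ_fin _)).
by rewrite sumEFin -EFinM -EFinB.
Qed.

End generalization_error.

Theorem theorem2 (R : realType) (dW dZ : measure_display)
  (Wsp : measurableType dW) (Zsp : measurableType dZ) (n : nat)
  (mu : probability Zsp R)
  (PS : probability (n.-tuple Zsp) R)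
  (kappa : R.-pker (n.-tuple Zsp) ~> Wsp)
  (PWS : probability (Wsp * n.-tuple Zsp)%type R)
  (PW : probability Wsp R)
  (PWZ : 'I_n -> probability (Wsp * Zsp)%type R)
  (PWmu : probability (Wsp * Zsp)%type R)
  (Phat : 'I_n -> probability (Wsp * Zsp)%type R)
  (l : Wsp * Zsp -> R) (sigma : R) :
  (0 < n)%N ->
  (* S = (Z_1, ..., Z_n) has i.i.d. entries with law mu *)
  (forall A : 'I_n -> set Zsp, (forall i, measurable (A i)) ->
     PS [set s | forall i, A i (tnth s i)] = (\prod_(i < n) mu (A i))%E) ->
  (* joint law of (W, S): S ~ PS and W | S ~ kappa *)
  (forall (A : set Wsp) (B : set (n.-tuple Zsp)), measurable A -> measurable B ->
     PWS (A `*` B) = (\int[PS]_(s in B) kappa s A)%E) ->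
  (* P_W is the marginal law of W *)
  (forall A : set Wsp, measurable A -> PW A = PWS (A `*` setT)) ->
  (* P_{W,Z_i} is the joint law of (W, Z_i) *)
  (forall (i : 'I_n) (C : set (Wsp * Zsp)%type), measurable C ->
     PWZ i C = PWS [set p | C (p.1, tnth p.2 i)]) ->
  (* PWmu = P_W (x) mu *)
  (forall (A : set Wsp) (B : set Zsp), measurable A -> measurable B ->
     PWmu (A `*` B) = (PW A * mu B)%E) ->
  (* the loss is a nonnegative measurable function *)
  measurable_fun [set: Wsp * Zsp] l ->
  (forall p, 0 <= l p) ->
  (* l(W, Z_i) is sigma-subgaussian under Phat i *)
  (forall i, subgaussian (Phat i) l sigma) ->
  let gen := (\int[PWS]_p
      ((\int[mu]_z (l (p.1, z))%:E) -
       ((n%:R)^-1 * \sum_(i < n) l (p.1, tnth p.2 i))%:E))%E in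
  (`| gen | <= (2 / n%:R)%:E *
     \sum_(i < n) sqrt_sigma2_mul sigma (KL PWmu (Phat i) + KL (PWZ i) (Phat i)))%E.
Proof.
move=> n_gt0 _ _ PW_marg PWZ_marg PWmu_prod ml l_ge0 l_sg /=.
rewrite -/(generalization_error mu PWS l).
have [[i KL_oo]|KL_fin] :=
  pselect (exists i, (KL PWmu (Phat i) + KL (PWZ i) (Phat i) = +oo)%E).
  rewrite (bigD1 i) //= {1}/sqrt_sigma2_mul KL_oo eqxx addye; last first.
    by rewrite gt_eqF // (lt_le_trans (ltNyr 0)) // sume_ge0 // => j _; exact: sqrt_sigma2_mul_ge0.
  by rewrite mulry gtr0_sg ?mul1e ?leey // divr_gt0 ?ltr0n.
pose ka i := fine (KL PWmu (Phat i)); pose kb i := fine (KL (PWZ i) (Phat i)).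
have KLE i : KL PWmu (Phat i) = (ka i)%:E /\ KL (PWZ i) (Phat i) = (kb i)%:E.
  have : (KL PWmu (Phat i) + KL (PWZ i) (Phat i) != +oo)%E.
    by apply/eqP => KL_oo; apply: KL_fin; exists i.
  rewrite adde_Neq_pinfty ?KL_neqNy // => /andP[KL1 KL2].
  by rewrite !fineK // ge0_fin_numE ?KL_ge0 ?ltey.
have [PWmu_fin _] := subgaussian_KL_bound l_ge0 ml (l_sg (Ordinal n_gt0)) (KLE _).1.
rewrite (generalization_errorE PW_marg PWZ_marg PWmu_prod ml l_ge0 n_gt0 PWmu_fin); last first.
  by move=> i; have [] := subgaussian_KL_bound l_ge0 ml (l_sg i) (KLE i).2.
have -> : (\sum_(i < n) sqrt_sigma2_mul sigma (KL PWmu (Phat i) + KL (PWZ i) (Phat i)))%E =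
    (\sum_(i < n) Num.sqrt (sigma ^+ 2 * (ka i + kb i)))%:E.
  rewrite -sumEFin; apply: eq_bigr => i _; have [-> ->] := KLE i.
  by rewrite /sqrt_sigma2_mul -EFinD.
rewrite -EFinM /= lee_fin; apply: le_trans (dist_mean_le _ _ n_gt0) _.
rewrite [2 / _]mulrC -mulrA ler_wpM2l ?invr_ge0 // mulr_sumr ler_sum // => i _.
by have [KL1 KL2] := KLE i; exact: dist_integral_le_KL l_ge0 ml (l_sg i) KL1 KL2.
Qed.
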